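(* Let $c_{\min}\le c_{\max}$ and $d_{\min}\le d_{\max}$ be integers, $T=\{c_{\min},\dots,c_{\max}\}\times\{d_{\min},\dots,d_{\max}\}$, let $f:T\to[0,1]$ be a probability mass function, and let $a:T\to[0,1]$ be monotonic, i.e. $a_{c,d}\ge a_{c',d'}$ whenever $c\le c'$ and $d\ge d'$. Consider the problem of choosing $p:T\to\mathbb{R}$ to $$\text{minimize}\ \sum_{(c,d)\in T} f_{c,d}\,p_{c,d}$$ subject to, for every $(c,d)\in T$: $p_{c,d}-c\,a_{c,d}\ge p_{c+1,d}-c\,a_{c+1,d}$ (if $c<c_{\max}$); $p_{c,d}-c\,a_{c,d}\ge p_{c-1,d}-c\,a_{c-1,d}$ (if $c>c_{\min}$); $p_{c,d}-c\,a_{c,d}\ge p_{c,d-1}-c\,a_{c,d-1}$ (if $d>d_{\min}$); $p_{c,d}-c\,a_{c,d}\ge 0$. Then the payment rule $$p_{c,d}=c\,a_{c,d}+\sum_{k=c+1}^{c_{\max}} a_{k,d}\qquad((c,d)\in T)$$ is an optimal solution of this problem.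
   Context: Types $(c,d)$ consist of a forwarding cost $c$ and a predicted path duration $d$; $f_{c,d}$ is the probability that a bidder has type $(c,d)$, $a_{c,d}$ is the interim probability that a bidder reporting $(c,d)$ wins, and $p_{c,d}$ is its expected payment. The first three families of constraints are the adjacent incentive-compatibility constraints and the last is individual rationality; the objective is the auctioneer's expected payment. *)

From HB Require Import structures.
From mathcomp Require Import all_boot all_order all_algebra.
Set Implicit Arguments. Unset Strict Implicit. Unset Printing Implicit Defensive.
Import Order.TTheory GRing.Theory Num.Theory.
Local Open Scope ring_scope.

Definition zrange (m n : int) : seq int :=
  if m <= n then [seq m + (i%:Z) | i <- iota 0 (absz (n - m)).+1] else [::].

Section Auction.
Variables (R : realFieldType) (cmin cmax dmin dmax : int).

Definition inT (c d : int) : bool := (cmin <= c <= cmax) && (dmin <= d <= dmax).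

Definition sumT (g : int -> int -> R) : R :=
  \sum_(c <- zrange cmin cmax) \sum_(d <- zrange dmin dmax) g c d.

Definition is_pmf (f : int -> int -> R) : Prop :=
  (forall c d, inT c d -> 0 <= f c d <= 1) /\ sumT f = 1.

Definition alloc_ok (a : int -> int -> R) : Prop :=
  (forall c d, inT c d -> 0 <= a c d <= 1) /\
  (forall c d c' d', inT c d -> inT c' d' -> c <= c' -> d' <= d ->
     a c' d' <= a c d).

Definition feasible (a p : int -> int -> R) : Prop :=
  forall c d, inT c d ->
    (c < cmax -> p c d - c%:~R * a c d >= p (c + 1) d - c%:~R * a (c + 1) d) /\
    (cmin < c -> p c d - c%:~R * a c d >= p (c - 1) d - c%:~R * a (c - 1) d) /\
    (dmin < d -> p c d - c%:~R * a c d >= p c (d - 1) - c%:~R * a c (d - 1)) /\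
    (p c d - c%:~R * a c d >= 0).

Definition objective (f p : int -> int -> R) : R := sumT (fun c d => f c d * p c d).

Definition pay_rule (a : int -> int -> R) (c d : int) : R :=
  c%:~R * a c d + \sum_(k <- zrange (c + 1) cmax) a k d.

End Auction.

(** The payment rule leaves bidder (c,d) exactly the information rent
    [sum_(k = c+1 .. cmax) a_{k,d}].  It satisfies the upward constraints with
    equality, the downward ones because [a] decreases in the cost, the
    duration constraints because [a] increases in the duration, and individual
    rationality because [a >= 0].  Conversely, individual rationality at [cmax]
    and the upward constraints, chained down from [cmax] to [c], force every
    feasible [p] to pay at least [pay_rule] at every type; as [f >= 0], the
    objective is then pointwise minimised. *)

From HB Require Import structures.
From mathcomp Require Import all_boot all_order all_algebra.
From mathcomp Require Import lra zify.
Set Implicit Arguments. Unset Strict Implicit. Unset Printing Implicit Defensive.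
Import Order.TTheory GRing.Theory Num.Theory.
Local Open Scope ring_scope.

Lemma zrange_nil (m n : int) : n < m -> zrange m n = [::].
Proof. by move=> ltnm; rewrite /zrange; case: ifP => //; lia. Qed.

Lemma zrange_cons (m n : int) : m <= n -> zrange m n = m :: zrange (m + 1) n.
Proof.
move=> lemn; rewrite /zrange lemn /= addr0; congr cons.
have [lem1n | ltnm1] := lerP (m + 1) n; last first.
  have -> : n = m by lia.
  by rewrite subrr.
have -> : absz (n - m)%R = (absz (n - (m + 1))%R).+1 by lia.
rewrite /= addr0; congr cons.
rewrite (iotaDl 1 1) -map_comp; apply: eq_map => i /=; lia.
Qed.

Lemma mem_zrange (m n x : int) : x \in zrange m n -> m <= x <= n.
Proof.
rewrite /zrange; case: ifP => // lemn /mapP [i] /[!mem_iota] /andP [_ lti] ->.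
lia.
Qed.

Section PaymentRule.
Variables (R : realFieldType) (cmax : int) (a : int -> int -> R).

Definition rent (c d : int) : R := \sum_(k <- zrange (c + 1) cmax) a k d.

Lemma pay_rule_rent (c d : int) : pay_rule cmax a c d - c%:~R * a c d = rent c d.
Proof. by rewrite /pay_rule /rent addrAC subrr add0r. Qed.

Lemma rent_step (c d : int) : c < cmax -> rent c d = a (c + 1) d + rent (c + 1) d.
Proof. by move=> ltc; rewrite /rent zrange_cons ?big_cons //; lia. Qed.

Lemma rent_cmax (d : int) : rent cmax d = 0.
Proof. by rewrite /rent zrange_nil ?big_nil //; lia. Qed.

Lemma pay_rule_up (c d : int) : c < cmax ->
  pay_rule cmax a c d - c%:~R * a c d =
  pay_rule cmax a (c + 1) d - c%:~R * a (c + 1) d.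
Proof.
move=> ltc; rewrite pay_rule_rent rent_step // -pay_rule_rent rmorphD /=; lra.
Qed.

Lemma pay_rule_down (c d : int) : c <= cmax -> a c d <= a (c - 1) d ->
  pay_rule cmax a (c - 1) d - c%:~R * a (c - 1) d <=
  pay_rule cmax a c d - c%:~R * a c d.
Proof.
move=> lec le_a; have ltc1 : c - 1 < cmax by lia.
have := rent_step d ltc1; rewrite subrK -!pay_rule_rent rmorphB /=; lra.
Qed.

End PaymentRule.

Section Optimality.
Variables (R : realFieldType) (cmin cmax dmin dmax : int).
Variable a : int -> int -> R.

Local Notation inT := (inT cmin cmax dmin dmax).

Lemma inT_c (c c' d : int) : inT c d -> cmin <= c' <= cmax -> inT c' d.
Proof. by rewrite /inT => /andP [_ ->] ->. Qed.

Lemma pay_rule_le_feasible (p : int -> int -> R) :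
  feasible cmin cmax dmin dmax a p ->
  forall c d, inT c d -> pay_rule cmax a c d <= p c d.
Proof.
move=> p_ok c d cdT; have /andP [/andP [_ lecm] _] := cdT.
have [n] : exists n : nat, cmax - c = n%:Z by exists (absz (cmax - c)); lia.
elim: n c cdT {lecm} => [|n IHn] c cdT dist.
  have ceq : c = cmax by lia.
  have [_ [_ [_ ir]]] := p_ok c d cdT; subst c.
  have := pay_rule_rent cmax a cmax d; rewrite rent_cmax; lra.
have ltc : c < cmax by lia.
have c1T : inT (c + 1) d.
  by apply: (inT_c cdT); move: cdT => /andP [/andP [? _] _]; lia.
have dist1 : cmax - (c + 1) = n by lia.
have := IHn _ c1T dist1.
have [up _] := p_ok c d cdT; have := up ltc.
have := pay_rule_up a d ltc; lra.
Qed.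

Hypothesis a_ok : alloc_ok cmin cmax dmin dmax a.

Lemma rent_ge0 (c d : int) : inT c d -> 0 <= rent cmax a c d.
Proof.
move=> cdT; rewrite /rent big_seq; apply: sumr_ge0 => k /mem_zrange kc.
have kdT : inT k d.
  by apply: (inT_c cdT); move: cdT => /andP [/andP [? _] _]; lia.
by have /andP [] := a_ok.1 k d kdT.
Qed.

Lemma rent_le_d (c d : int) : inT c d -> dmin < d ->
  rent cmax a c (d - 1) <= rent cmax a c d.
Proof.
move=> /andP [/andP [lec _] /andP [led ledm]] ltd.
rewrite /rent !big_seq; apply: ler_sum => k /mem_zrange kc.
apply: a_ok.2; rewrite ?lexx /inT; lia.
Qed.

Lemma pay_rule_feasible : feasible cmin cmax dmin dmax a (pay_rule cmax a).
Proof.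
move=> c d cdT; have /andP [/andP [lec lecm] _] := cdT.
split; [|split; [|split]] => [ltc | ltc | ltd |].
- by rewrite pay_rule_up.
- apply: pay_rule_down => //; apply: a_ok.2; rewrite ?lexx //; last lia.
  by apply: (inT_c cdT); lia.
- rewrite !pay_rule_rent; exact: rent_le_d.
- by rewrite pay_rule_rent; exact: rent_ge0.
Qed.

End Optimality.

Lemma ler_objective (R : realFieldType) (cmin cmax dmin dmax : int)
    (f p q : int -> int -> R) :
  (forall c d, inT cmin cmax dmin dmax c d -> 0 <= f c d) ->
  (forall c d, inT cmin cmax dmin dmax c d -> p c d <= q c d) ->
  objective cmin cmax dmin dmax f p <= objective cmin cmax dmin dmax f q.
Proof.
move=> f_ge0 le_pq; rewrite /objective /sumT !big_seq.
apply: ler_sum => c /mem_zrange cT; rewrite !big_seq.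
apply: ler_sum => d /mem_zrange dT.
have cdT : inT cmin cmax dmin dmax c d by rewrite /inT cT dT.
by apply: ler_wpM2l; [exact: f_ge0 | exact: le_pq].
Qed.

Theorem theorem2 (R : realFieldType) (cmin cmax dmin dmax : int)
  (f a : int -> int -> R) :
  cmin <= cmax -> dmin <= dmax ->
  is_pmf cmin cmax dmin dmax f ->
  alloc_ok cmin cmax dmin dmax a ->
  feasible cmin cmax dmin dmax a (pay_rule cmax a) /\
  (forall p : int -> int -> R, feasible cmin cmax dmin dmax a p ->
     objective cmin cmax dmin dmax f (pay_rule cmax a)
       <= objective cmin cmax dmin dmax f p).
Proof.
move=> _ _ [f_01 _] a_ok; split; first exact: pay_rule_feasible.
move=> p p_ok; apply: ler_objective; last exact: pay_rule_le_feasible.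
by move=> c d /f_01 /andP [].
Qed.
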